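(* Let $q$ be a prime, let $d=\pi(q-1)$, let $p_1<\dots<p_d$ be the primes less than $q$, and for $n\in\{1,\dots,q-1\}$ with $n=\prod_{i=1}^d p_i^{\mu_i(n)}$ define the linear form $\mathscr{L}_n:\mathbb{F}_q^d\to\mathbb{F}_q$, $\mathscr{L}_n(\mathbf{v})=\sum_{i=1}^d\mu_i(n)v_i$. Let $k\in\mathbb{N}$. (a) If $n_1,\dots,n_k\in\{1,\dots,q-1\}$ are multiplicatively dependent, then $\mathscr{L}_{n_1},\dots,\mathscr{L}_{n_k}$ are $\mathbb{F}_q$-dependent. (b) Suppose $k<\frac{\log q}{10\log_2 q}$. Then $n_1,\dots,n_k\in\{2,3,\dots,q-1\}$ are multiplicatively independent if and only if $\mathscr{L}_{n_1},\dots,\mathscr{L}_{n_k}$ are $\mathbb{F}_q$-independent.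
   Context: Integers $n_1,\dots,n_r$ are multiplicatively independent if $\alpha_1=\dots=\alpha_r=0$ is the only integer solution of $n_1^{\alpha_1}\cdots n_r^{\alpha_r}=1$, and multiplicatively dependent otherwise. Forms $\mathscr{L}_{n_1},\dots,\mathscr{L}_{n_k}$ are $\mathbb{F}_q$-independent if $\alpha_1\mathscr{L}_{n_1}+\dots+\alpha_k\mathscr{L}_{n_k}=0$ (as a function on $\mathbb{F}_q^d$) with $\alpha_i\in\mathbb{F}_q$ forces all $\alpha_i=0$, and $\mathbb{F}_q$-dependent otherwise. $\log x:=\max\{\ln x,2\}$, $\log_2 x=\log\log x$; $\pi(x)$ is the number of primes $\le x$. *)

From HB Require Import structures.
From mathcomp Require Import all_boot all_order all_algebra.
From Stdlib Require Reals.
Set Implicit Arguments. Unset Strict Implicit. Unset Printing Implicit Defensive.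
Import Order.TTheory GRing.Theory Num.Theory.

Definition primes_lt (q : nat) : seq nat := filter prime (iota 0 q).
Definition dq (q : nat) : nat := size (primes_lt q).
(* p_(i+1) for i : 'I_d (0-based index) *)
Definition pr (q : nat) (i : nat) : nat := nth 0 (primes_lt q) i.

Local Open Scope ring_scope.

Definition Lform (q n : nat) (v : 'rV['F_q]_(dq q)) : 'F_q :=
  \sum_(i < dq q) (logn (pr q i) n)%:R * v ord0 i.

Definition Fq_dep (q k : nat) (n : 'I_k -> nat) : Prop :=
  exists a : 'I_k -> 'F_q, (exists j, a j != 0) /\
    forall v : 'rV['F_q]_(dq q), \sum_(j < k) a j * Lform (n j) v = 0.
Definition Fq_indep (q k : nat) (n : 'I_k -> nat) : Prop := ~ Fq_dep q n.

Definition mult_dep (k : nat) (n : 'I_k -> nat) : Prop :=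
  exists a : 'I_k -> int, (exists j, a j != 0) /\
    \prod_(j < k) ((n j)%:Q ^ a j) = 1.
Definition mult_indep (k : nat) (n : 'I_k -> nat) : Prop := ~ mult_dep n.

Local Close Scope ring_scope.

Section RealPart.
Import Reals.
Local Open Scope R_scope.
Definition Log (x : R) : R := Rmax (ln x) 2.
Definition Log2 (x : R) : R := Log (Log x).
Definition small_k (k q : nat) : Prop :=
  INR k < Log (INR q) / (10 * Log2 (INR q)).
End RealPart.

From Stdlib Require Import Reals Lra.
From mathcomp Require Import all_boot all_order all_algebra perm.
Set Implicit Arguments. Unset Strict Implicit. Unset Printing Implicit Defensive.
Import Order.TTheory GRing.Theory Num.Theory.

(* A multiplicative relation prod_j n_j^(c_j) = 1 is an integer vector c in the left
   kernel of the exponent matrix E = (mu_i(n_j)), and an F_q-relation among the forms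
   L_(n_j) is a kernel vector of E mod q.  For (a), divide c by the gcd of its entries
   so that it survives reduction mod q.  For (b), an F_q-relation makes q divide
   det (E E^T).  As n has at most trunc_log 2 n prime factors, the entries of E E^T are
   at most B = (trunc_log 2 q)^2, so |det (E E^T)| <= k! B^k, which is < q for k small;
   hence det (E E^T) = 0.  A rational kernel vector x of E E^T satisfies |x E|^2 = 0, so
   it lies in the kernel of E, and clearing denominators gives a multiplicative relation. *)

Lemma logn_small p n : 0 < n < p -> logn p n = 0.
Proof.
case/andP=> n_gt0 n_lt_p; apply/eqP; rewrite -leqn0 leqNgt logn_gt0 mem_primes.
by apply: contraL n_lt_p => /and3P[_ _ /(dvdn_leq n_gt0)]; rewrite -leqNgt.
Qed.

Lemma pr_prime q i : i < dq q -> prime (pr q i) && (pr q i < q).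
Proof. by move=> i_lt; have := mem_nth 0 i_lt; rewrite mem_filter mem_iota. Qed.

Lemma pr_index q p : prime p -> p < q -> exists2 i, i < dq q & pr q i = p.
Proof.
move=> pp p_lt_q; have p_in : p \in primes_lt q by rewrite mem_filter pp mem_iota.
by exists (index p (primes_lt q)); rewrite /dq /pr ?index_mem ?nth_index.
Qed.

Lemma prod_pr_logn q n : 0 < n < q -> \prod_(i < dq q) pr q i ^ logn (pr q i) n = n.
Proof.
case/andP=> n_gt0 n_lt_q.
rewrite -(big_mkord xpredT (fun i => pr q i ^ logn (pr q i) n)).
rewrite -(big_nth 0 xpredT (fun p => p ^ logn p n)) big_filter.
rewrite -{2}(partnT n_gt0) /partn -(subnKC n_lt_q) /index_iota !subn0.
rewrite iotaD big_cat /= [X in _ * X]big1_seq ?muln1 => [|p /andP[_]]; last first.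
  by rewrite mem_iota => /andP[n_lt_p _]; rewrite logn_small ?n_gt0.
by rewrite big_mkcond; apply: eq_bigr => p _; case: ifP => // np; rewrite lognE np.
Qed.

Lemma sum_logn_pr_le q n : 0 < n < q -> \sum_(i < dq q) logn (pr q i) n <= trunc_log 2 q.
Proof.
move=> n_range; apply: trunc_log_max => //; rewrite expn_sum.
apply: leq_trans (_ : n <= q); last by case/andP: n_range => _ /ltnW.
rewrite -[X in _ <= X](prod_pr_logn n_range); apply: leq_prod => i _.
case/andP: (pr_prime (ltn_ord i)) => /prime_gt1 pr_gt1 _.
by case: logn => // e; rewrite leq_exp2r.
Qed.

Lemma logn_prod p (I : finType) (F : I -> nat) :
  (forall i, 0 < F i) -> logn p (\prod_i F i) = \sum_i logn p (F i).
Proof.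
move=> F_gt0.
suff /andP[_ /eqP //] : (0 < \prod_i F i) && (logn p (\prod_i F i) == \sum_i logn p (F i)).
apply: (big_ind2 (fun m l => (0 < m) && (logn p m == l))) => [|m1 l1 m2 l2 | i _].
- by rewrite logn1.
- move=> /andP[m1_gt0 /eqP <-] /andP[m2_gt0 /eqP <-].
  by rewrite muln_gt0 m1_gt0 m2_gt0 lognM ?eqxx.
- by rewrite F_gt0 eqxx.
Qed.

Section MultiplicativeRelations.
Local Open Scope ring_scope.

Definition zpos (z : int) : nat := if z is Posz m then m else 0.
Definition zneg (z : int) : nat := if z is Negz m then m.+1 else 0.

Lemma zposBneg (z : int) : z = (zpos z)%:Z - (zneg z)%:Z.
Proof. by case: z => m //=; rewrite ?subr0 // NegzE sub0r. Qed.

Lemma exprz_posneg (F : unitRingType) (x : F) (z : int) :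
  x ^ z = x ^+ zpos z / x ^+ zneg z.
Proof. by case: z => m /=; rewrite ?expr0 ?invr1 ?mulr1 ?mul1r. Qed.

Lemma prod_exprz_eq1 (I : finType) (n : I -> nat) (a : I -> int) :
  (forall j, 0 < n j)%N ->
  \prod_j (n j)%:Q ^ a j = 1 <->
  forall p, prime p -> \sum_j a j * (logn p (n j))%:Z = 0.
Proof.
move=> n_gt0; pose P := (\prod_j n j ^ zpos (a j))%N; pose N := (\prod_j n j ^ zneg (a j))%N.
have P_gt0 : (0 < P)%N by rewrite prodn_gt0 // => j; rewrite expn_gt0 n_gt0.
have N_gt0 : (0 < N)%N by rewrite prodn_gt0 // => j; rewrite expn_gt0 n_gt0.
have -> : \prod_j (n j)%:Q ^ a j = P%:R / N%:R.
  rewrite !natr_prod -prodf_div; apply: eq_bigr => j _.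
  by rewrite exprz_posneg !natrX.
have logPN p : \sum_j a j * (logn p (n j))%:Z = (logn p P)%:Z - (logn p N)%:Z.
  have logn_prodX (e : I -> nat) :
      logn p (\prod_j n j ^ e j) = (\sum_j e j * logn p (n j))%N.
    rewrite logn_prod => [|j]; last by rewrite expn_gt0 n_gt0.
    by apply: eq_bigr => j _; rewrite lognX.
  rewrite !logn_prodX !(big_morph Posz PoszD (erefl _)) -sumrB.
  by apply: eq_bigr => j _; rewrite {1}(zposBneg (a j)) mulrBl !PoszM.
clearbody P N; have N0 : N%:R != 0 :> rat by rewrite pnatr_eq0 -lt0n.
split => [/divr1_eq /eqP | PN_log].
  by rewrite (eqr_nat rat) => /eqP PN p _; rewrite logPN PN subrr.
suff -> : P = N by rewrite divff.
apply: eqn_from_log => // p; have [pp | np] := boolP (prime p).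
  by apply/eqP; rewrite -eqz_nat -subr_eq0 -logPN PN_log.
by rewrite lognE (negPf np) [RHS]lognE (negPf np).
Qed.

End MultiplicativeRelations.

Section IntegerMatrices.
Local Open Scope ring_scope.

Lemma det_norm_le m (A : 'M[int]_m) (B : nat) :
  (forall i j, `|A i j| <= B)%N -> (`|\det A| <= m`! * B ^ m)%N.
Proof.
move=> hA; rewrite -lez_nat abszE /determinant.
apply: le_trans (ler_norm_sum _ _ _) _.
rewrite PoszM -card_Sn -sum1_card (big_morph Posz PoszD (erefl _)) mulr_suml.
apply: ler_sum => s _; rewrite mul1r normrM normrX normrN1 expr1n mul1r.
rewrite normr_prod -natz natrX natz -[m in _ ^+ m]card_ord -prodr_const.
by apply: ler_prod => i _; rewrite normr_ge0 /= -abszE lez_nat.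
Qed.

Lemma mulmx_gram_eq0 (R : realDomainType) m n (M : 'M[R]_(m, n)) (x : 'rV[R]_m) :
  x *m (M *m M^T) = 0 -> x *m M = 0.
Proof.
move=> xG0; set y := x *m M.
have : (y *m y^T) 0 0 = 0 by rewrite trmx_mul mulmxA -(mulmxA x) xG0 mul0mx mxE.
rewrite mxE; under eq_bigr do rewrite [y^T _ _]mxE -expr2.
move/(psumr_eq0P (fun i _ => sqr_ge0 (y 0 i))) => y2_0.
by apply/rowP => i; rewrite [RHS]mxE; apply/eqP; rewrite -sqrf_eq0 y2_0.
Qed.

Lemma int_kernel_of_rat_kernel m n (E : 'M[int]_(m, n)) (x : 'rV[rat]_m) :
  x != 0 -> x *m map_mx intr E = 0 -> exists2 c : 'rV[int]_m, c != 0 & c *m E = 0.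
Proof.
move=> x0 xE0; pose D := \prod_j denq (x 0 j).
have D0 : D%:~R != 0 :> rat by rewrite intr_eq0; apply/prodf_neq0 => j _; apply: denq_neq0.
pose c := \row_j (numq (x 0 j) * \prod_(l | l != j) denq (x 0 l)).
have cx : map_mx intr c = D%:~R *: x.
  by apply/rowP => j; rewrite !mxE [D](bigD1 j) //= !rmorphM /= numqE [RHS]mulrC mulrA.
exists c.
  apply: contraNneq x0 => c0; move/eqP: cx; rewrite c0 map_mx0 eq_sym.
  by rewrite scalemx_eq0 (negPf D0).
have : map_mx intr (c *m E) = 0 :> 'rV[rat]_n.
  by rewrite map_mxM cx -scalemxAl xE0 scaler0.
move/matrixP => cE0; apply/matrixP => i j.
by move/eqP: (cE0 i j); rewrite !mxE intr_eq0 => /eqP.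
Qed.

Lemma Fp_kernel_of_int_kernel p m n (E : 'M[int]_(m, n)) (c : 'rV[int]_m) :
  prime p -> c != 0 -> c *m E = 0 ->
  exists2 a : 'rV['F_p]_m, a != 0 & a *m map_mx intr E = 0.
Proof.
move=> pp c0 cE0; pose g := \big[gcdn/0%N]_j absz (c ord0 j).
have g_dvd j : (g %| c ord0 j)%Z by rewrite dvdzE (biggcdn_inf j).
have /rV0Pn[j0 cj0] := c0.
have g_gt0 : (0 < g)%N.
  rewrite lt0n; apply: contraNneq cj0 => g0.
  by move: (g_dvd j0); rewrite g0 dvd0z.
pose b := \row_j (c ord0 j %/ g)%Z.
have cb : c = g%:Z *: b by apply/rowP => j; rewrite !mxE mulrC divzK.
have bE0 : b *m E = 0.
  have gZ0 : g%:Z != 0 by rewrite eqz_nat -lt0n.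
  by apply: (scalemx_inj gZ0); rewrite scalemxAl -cb cE0 scaler0.
have [j1 bj1] : exists j, ~~ (p %| b ord0 j)%Z.
  apply/existsP; apply: contraT; rewrite negb_exists => /forallP /= b_dvd.
  have : (p * g %| g)%N.
    apply/dvdn_biggcdP => j _; rewrite cb mxE abszM [(p * g)%N]mulnC dvdn_pmul2l //.
    by have := b_dvd j; rewrite negbK dvdzE.
  by rewrite -{2}(mul1n g) dvdn_pmul2r // dvdn1 => /eqP p1; rewrite p1 in pp.
exists (map_mx intr b); last by rewrite -map_mxM bE0 map_mx0.
apply: contraNneq bj1 => /rowP /(_ j1); rewrite !mxE => /eqP.
by rewrite -(dvdz_pcharf (pchar_Fp pp)).
Qed.

Lemma dvdz_det_gram p m n (E : 'M[int]_(m, n)) (a : 'rV['F_p]_m) :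
  prime p -> a != 0 -> a *m map_mx intr E = 0 -> (p %| \det (E *m E^T))%Z.
Proof.
move=> pp a0 aE0; rewrite (dvdz_pcharf (pchar_Fp pp)) -det_map_mx map_mxM -map_trmx.
by apply/det0P; exists a; rewrite // mulmxA aE0 mul0mx.
Qed.

Lemma int_kernel_of_det_gram_eq0 m n (E : 'M[int]_(m, n)) :
  \det (E *m E^T) = 0 -> exists2 c : 'rV[int]_m, c != 0 & c *m E = 0.
Proof.
move=> G0; have /det0P[x x0 xG0] : \det (map_mx (intr : int -> rat) (E *m E^T)) == 0.
  by rewrite det_map_mx G0 rmorph0.
by apply: (int_kernel_of_rat_kernel x0); apply: mulmx_gram_eq0; rewrite map_trmx -map_mxM.
Qed.

(* The Gram determinant is divisible by p but smaller than p, hence zero. *)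
Lemma int_kernel_of_Fp_kernel p m n (E : 'M[int]_(m, n)) (a : 'rV['F_p]_m) (B : nat) :
  prime p -> (forall i j, `|(E *m E^T) i j| <= B)%N -> (m`! * B ^ m < p)%N ->
  a != 0 -> a *m map_mx intr E = 0 -> exists2 c : 'rV[int]_m, c != 0 & c *m E = 0.
Proof.
move=> pp GB Bp a0 aE0; apply: int_kernel_of_det_gram_eq0; apply/eqP.
rewrite -absz_eq0 -leqn0 leqNgt; apply: contraL Bp => det_gt0; rewrite -leqNgt.
apply: leq_trans (det_norm_le GB).
by apply: dvdn_leq det_gt0 _; have := dvdz_det_gram pp a0 aE0; rewrite dvdzE.
Qed.

End IntegerMatrices.

Section ExponentMatrix.
Local Open Scope ring_scope.

Definition exponent_mx q k (n : 'I_k -> nat) : 'M[int]_(k, dq q) :=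
  \matrix_(j, i) (logn (pr q i) (n j))%:Z.

Variables (q k : nat) (n : 'I_k -> nat).

Lemma Fq_depE :
  Fq_dep q n <-> exists2 a : 'rV['F_q]_k, a != 0 & a *m map_mx intr (exponent_mx q n) = 0.
Proof.
have sum_Lform (a : 'I_k -> 'F_q) (v : 'rV_(dq q)) : \sum_j a j * Lform (n j) v =
    \sum_i ((\row_j a j) *m map_mx intr (exponent_mx q n)) 0 i * v ord0 i.
  rewrite /Lform; under eq_bigr do rewrite mulr_sumr.
  rewrite exchange_big; apply: eq_bigr => i _; rewrite mxE mulr_suml.
  by apply: eq_bigr => j _; rewrite !mxE mulrA.
split => [[a [[j0 aj0] aL0]] | [a a0 aE0]].
  exists (\row_j a j); first by apply/rV0Pn; exists j0; rewrite mxE.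
  apply/rowP => i; move: (aL0 (delta_mx 0 i)); rewrite sum_Lform (bigD1 i) //= big1.
    by rewrite !mxE eqxx mulr1 addr0.
  by move=> l li; rewrite !mxE (negPf li) andbF mulr0.
exists (a 0); split; first exact/rV0Pn.
move=> v; rewrite sum_Lform big1 // => i _.
have -> : \row_j a 0 j = a by apply/rowP => j; rewrite mxE.
by rewrite aE0 mxE mul0r.
Qed.

Hypothesis n_range : forall j, (0 < n j < q)%N.

Let n_gt0 j : (0 < n j)%N. Proof. by case/andP: (n_range j). Qed.

Lemma exponent_mx_relE (c : 'I_k -> int) :
  (forall p, prime p -> \sum_j c j * (logn p (n j))%:Z = 0) <->
  (\row_j c j) *m exponent_mx q n = 0.
Proof.
split => [c_rel | cE0 p pp].
  apply/rowP => i; have /andP[pp _] := pr_prime (ltn_ord i).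
  by rewrite !mxE -[RHS](c_rel _ pp); apply: eq_bigr => j _; rewrite !mxE.
have [p_lt_q | q_le_p] := ltnP p q.
  have [i i_lt <-] := pr_index pp p_lt_q.
  have := congr1 (fun r : 'rV_(dq q) => r 0 (Ordinal i_lt)) cE0; rewrite /= !mxE => cE0i.
  by rewrite -[RHS]cE0i; apply: eq_bigr => j _; rewrite !mxE.
apply: big1 => j _; rewrite logn_small ?mulr0 // n_gt0.
by case/andP: (n_range j) => _ /leq_trans->.
Qed.

Lemma mult_depE :
  mult_dep n <-> exists2 c : 'rV[int]_k, c != 0 & c *m exponent_mx q n = 0.
Proof.
split => [[a [[j0 aj0] /(prod_exprz_eq1 _ n_gt0)/exponent_mx_relE aE0]] | [c c0 cE0]].
  by exists (\row_j a j) => //; apply/rV0Pn; exists j0; rewrite mxE.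
exists (c 0); split; first exact/rV0Pn.
apply/(prod_exprz_eq1 _ n_gt0)/exponent_mx_relE.
by rewrite -cE0; congr (_ *m _); apply/rowP => j; rewrite mxE.
Qed.

Lemma gram_exponent_mx_le j l :
  (`|(exponent_mx q n *m (exponent_mx q n)^T) j l| <= trunc_log 2 q ^ 2)%N.
Proof.
pose mu j (i : 'I_(dq q)) := logn (pr q i) (n j).
have -> : (exponent_mx q n *m (exponent_mx q n)^T) j l = (\sum_i mu j i * mu l i)%N%:Z.
  rewrite mxE (big_morph Posz PoszD (erefl _)).
  by apply: eq_bigr => i _; rewrite !mxE PoszM.
rewrite absz_nat expnS expn1.
apply: leq_trans (leq_mul (sum_logn_pr_le (n_range j)) (sum_logn_pr_le (n_range l))).
rewrite big_distrl /=; apply: leq_sum => i _.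
by rewrite leq_mul2l (bigD1 i) //= leq_addr orbT.
Qed.

End ExponentMatrix.

Lemma fact_le_expn m : m`! <= m ^ m.
Proof.
elim: m => // m IHm; rewrite factS expnS leq_mul2l; apply/orP; right.
by apply: leq_trans IHm _; case: m => // m; rewrite leq_exp2r.
Qed.

Section SizeCondition.
Local Open Scope R_scope.

Lemma INR_expn m e : INR (m ^ e) = INR m ^ e.
Proof. by elim: e => // e IHe; rewrite expnS -multE mult_INR IHe. Qed.

Lemma small_k_ln k q :
  small_k k.+1 q -> 20 < ln (INR q) /\ 10 * INR k.+1 * ln (ln (INR q)) < ln (INR q).
Proof.
rewrite /small_k /Log2 => hk.
have Log2_ge2 : 2 <= Log (Log (INR q)) by apply: Rmax_r.
have k_ge1 : 1 <= INR k.+1 by rewrite S_INR; have := pos_INR k; lra.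
have hk' : 10 * INR k.+1 * Log (Log (INR q)) < Log (INR q).
  have := Rmult_lt_compat_r (10 * Log (Log (INR q))) _ _ ltac:(lra) hk.
  by rewrite /Rdiv Rmult_assoc Rinv_l; lra.
have Log_gt20 : 20 < Log (INR q) by nra.
have LogE : Log (INR q) = ln (INR q).
  by move: Log_gt20; rewrite /Log /Rmax; case: Rle_dec => //; lra.
split; first lra.
rewrite LogE in hk'; apply: Rle_lt_trans hk'; apply: Rmult_le_compat_l; first lra.
exact: Rmax_l.
Qed.

Lemma small_k_pow_lt k q L :
  INR (2 ^ L) <= INR q -> small_k k.+1 q -> (INR k.+1 * INR L ^ 2) ^ k.+1 < INR q.
Proof.
move=> hL /small_k_ln[]; set x := ln (INR q) => x_gt20 hk.
have q_gt0 : 0 < INR q by apply: Rlt_le_trans hL; apply/lt_0_INR/ssrnat.ltP; rewrite expn_gt0.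
have lnx_ge1 : 1 <= ln x.
  rewrite -[1](ln_exp 1); apply: Rlt_le; apply: ln_increasing; first exact: exp_pos.
  by have := exp_le_3; lra.
have k_le_x : INR k.+1 <= x by have := pos_INR k.+1; nra.
have L_le_2x : INR L <= 2 * x.
  have two : INR 2 = 2 by rewrite /=; lra.
  rewrite INR_expn two in hL.
  have : INR L * ln 2 <= x.
    rewrite -ln_pow; last lra.
    case: (Rle_lt_or_eq_dec _ _ hL) => [/ln_increasing | ->]; last by right.
    by move/(_ (pow_lt 2 L ltac:(lra)))/Rlt_le.
  by have := ln_lt_2; have := pos_INR L; nra.
have base_le : INR k.+1 * INR L ^ 2 <= x ^ 4.
  have L2 : INR L ^ 2 <= 4 * x ^ 2 by have := pos_INR L; nra.
  apply: (Rle_trans _ (x * (4 * x ^ 2))).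
    by apply: Rmult_le_compat => //; [apply: pos_INR | apply: pow_le; apply: pos_INR].
  have := pow_le x 3 ltac:(lra); rewrite /=; nra.
apply: Rle_lt_trans (pow_incr _ _ k.+1 (conj _ base_le)) _.
  by apply: Rmult_le_pos; [apply: pos_INR | apply: pow_le; apply: pos_INR].
apply: ln_lt_inv => //; first by do 2 apply: pow_lt; lra.
rewrite ln_pow; last by apply: pow_lt; lra.
rewrite ln_pow; last lra.
have four : INR 4 = 4 by rewrite /=; lra.
by rewrite four -/x; have := pos_INR k.+1; nra.
Qed.

End SizeCondition.

Lemma small_k_bound k q : 1 < q -> small_k k q -> k`! * (trunc_log 2 q ^ 2) ^ k < q.
Proof.
case: k => [|k] q_gt1 hk; first by rewrite fact0 mul1n.
apply: leq_ltn_trans (_ : _ <= (k.+1 * trunc_log 2 q ^ 2) ^ k.+1) _.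
  by rewrite expnMn leq_mul2r fact_le_expn orbT.
apply/ssrnat.ltP/INR_lt; rewrite INR_expn -multE mult_INR INR_expn.
by apply: small_k_pow_lt hk; apply/le_INR/ssrnat.leP/trunc_logP; rewrite // ltnW.
Qed.

Theorem lemma3p2 (q : nat) (hq : prime q) (k : nat) :
  (forall n : 'I_k -> nat,
     (forall j, 0 < n j < q) -> mult_dep n -> Fq_dep q n) /\
  (small_k k q ->
   forall n : 'I_k -> nat,
     (forall j, 1 < n j < q) -> (mult_indep n <-> Fq_indep q n)).
Proof.
have part_a (n : 'I_k -> nat) : (forall j, 0 < n j < q) -> mult_dep n -> Fq_dep q n.
  move=> n_range /(mult_depE n_range)[c c0 cE0].
  by apply/Fq_depE; apply: Fp_kernel_of_int_kernel hq c0 cE0.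
split=> [|k_small n n_range]; first exact: part_a.
have n_pos j : 0 < n j < q by case/andP: (n_range j) => /ltnW ->.
split=> [n_indep /Fq_depE[a a0 aE0] | L_indep /part_a n_dep]; last exact: L_indep (n_dep n_pos).
have gram_small := small_k_bound (prime_gt1 hq) k_small.
apply/n_indep/(mult_depE n_pos).
exact: int_kernel_of_Fp_kernel hq (gram_exponent_mx_le n_pos) gram_small a0 aE0.
Qed.
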